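(* Let $k$ be a positive integer and let $D$ be a digraph of order $n$ with no isolated vertex such that $\Delta^-(D)\ge\Delta^+(D)\ge1$. If $k>(\Delta^-(D))^2$, then $\gamma_{trk}(D)=n$.
   Context: All digraphs are finite, with no loops or multiple arcs (pairs of opposite arcs are allowed). $N^-(v)$ denotes the set of in-neighbors of $v$; $\Delta^+(D)$ and $\Delta^-(D)$ are the maximum out-degree and maximum in-degree of $D$. A vertex is isolated if it has no in-neighbor and no out-neighbor. For a positive integer $k$, a $k$-rainbow dominating function ($k$RDF) on $D$ is a function $f:V(D)\to\mathcal P(\{1,\dots,k\})$ such that every $v$ with $f(v)=\emptyset$ satisfies $\bigcup_{u\in N^-(v)}f(u)=\{1,\dots,k\}$; its weight is $\omega(f)=\sum_v|f(v)|$. If $D$ has no isolated vertex, a total $k$RDF (T$k$RDF) is a $k$RDF $f$ such that the subdigraph induced by $\{v:f(v)\ne\emptyset\}$ has no isolated vertex; $\gamma_{trk}(D)$ is the minimum weight of a T$k$RDF. *)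

(* A digraph is a finite vertex type V with an arc relation
   A : rel V (A u v = there is an arc u -> v), required to be irreflexive
   (no loops); opposite arcs are allowed; no multiple arcs by construction. *)
From mathcomp Require Import all_boot.
Set Implicit Arguments. Unset Strict Implicit. Unset Printing Implicit Defensive.

Section Digraph.
Variables (V : finType) (A : rel V).

Definition in_nbhd (v : V) : {set V} := [set u | A u v].
Definition out_nbhd (v : V) : {set V} := [set w | A v w].

Definition indeg (v : V) : nat := #|in_nbhd v|.
Definition outdeg (v : V) : nat := #|out_nbhd v|.

Definition max_outdeg : nat := \max_(v : V) outdeg v.
Definition max_indeg : nat := \max_(v : V) indeg v.

Definition isolated (v : V) : bool := (in_nbhd v == set0) && (out_nbhd v == set0).
Definition no_isolated : bool := [forall v, ~~ isolated v].

(* k-rainbow dominating functions, colours {1..k} encoded as 'I_k *)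
Definition is_kRDF (k : nat) (f : {ffun V -> {set 'I_k}}) : bool :=
  [forall v, (f v == set0) ==> (\bigcup_(u in in_nbhd v) f u == [set: 'I_k])].

Definition weight (k : nat) (f : {ffun V -> {set 'I_k}}) : nat :=
  \sum_(v : V) #|f v|.

(* the subdigraph induced by {v : f v <> empty} has no isolated vertex *)
Definition is_TkRDF (k : nat) (f : {ffun V -> {set 'I_k}}) : bool :=
  is_kRDF f &&
  [forall v, (f v != set0) ==>
     [exists u, (f u != set0) && (A u v || A v u)]].

(* When D has no isolated vertex,
   the function v |-> {1..k} is a TkRDF of weight k * #|V|, so the default
   value of the min below is attained and this is the true minimum. *)
Definition gamma_trk (k : nat) : nat :=
  \big[minn/(k * #|V|)]_(f : {ffun V -> {set 'I_k}} | is_TkRDF f) weight f.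

End Digraph.

(* A colour class of size s at u can be "charged" s - 1 times, once for each of
   its copies beyond the first.  A vertex v with f v = set0 sees all k colours on
   at most Delta^- in-neighbours, so it collects at least k - Delta^- charges from
   them; each in-neighbour u lends its charges to at most Delta^+ such vertices.
   Hence #{v | f v = set0} * (k - Delta^-) <= Delta^+ * (total charge), and when
   k >= Delta^- + Delta^+ (which k > (Delta^-)^2 forces) the total charge pays for
   the empty vertices: weight f >= #|V|.  The constant function {1} attains it. *)
From HB Require Import structures.
From mathcomp Require Import all_boot zify.

Set Implicit Arguments.
Unset Strict Implicit.
Unset Printing Implicit Defensive.

HB.instance Definition _ := SemiGroup.isComLaw.Build nat minn minnA minnC.

Lemma geq_bigminn_cond (I : finType) (P : pred I) (F : I -> nat) x i0 :
  P i0 -> \big[minn/x]_(i | P i) F i <= F i0.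
Proof.
move=> Pi0; rewrite (big_rem_AC _ _ _ _ (mem_index_enum i0)) Pi0.
exact: geq_minl.
Qed.

Lemma leq_card_bigcup (I T : finType) (P : pred I) (F : I -> {set T}) :
  #|\bigcup_(i | P i) F i| <= \sum_(i | P i) #|F i|.
Proof.
apply: (big_ind2 (fun (S : {set T}) n => #|S| <= n)) => //.
- by rewrite cards0.
- move=> S1 n1 S2 n2 le1 le2.
  by apply: leq_trans (leq_card_setU S1 S2) _; apply: leq_add.
Qed.

Section RainbowDomination.

Variables (V : finType) (A : rel V).

Lemma leq_indeg_max v : indeg A v <= max_indeg A.
Proof. exact: (@leq_bigmax V (indeg A) v). Qed.

Lemma leq_outdeg_max v : outdeg A v <= max_outdeg A.
Proof. exact: (@leq_bigmax V (outdeg A) v). Qed.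

Lemma sum_in_nbhd_outdeg (g : V -> nat) :
  \sum_v \sum_(u in in_nbhd A v) g u = \sum_u g u * outdeg A u.
Proof.
transitivity (\sum_v \sum_u (if A u v then g u else 0)).
  by apply: eq_bigr => v _; rewrite big_mkcond; apply: eq_bigr => u _; rewrite inE.
rewrite exchange_big; apply: eq_bigr => u _.
rewrite /outdeg -sum1_card big_distrr [RHS]big_mkcond.
by apply: eq_bigr => v _; rewrite inE; case: (A u v); rewrite /= ?muln1.
Qed.

Lemma weight_charge k (f : {ffun V -> {set 'I_k}}) :
  weight f = \sum_u (#|f u|).-1 + #|[set u | f u != set0]|.
Proof.
rewrite /weight -sum1_card [X in _ + X]big_mkcond -big_split; apply: eq_bigr => u _.
by rewrite inE -card_gt0; case: (#|f u|) => [|n]; rewrite /= ?addn0 ?addn1.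
Qed.

Lemma kRDF_in_nbhd_charge k (f : {ffun V -> {set 'I_k}}) v :
  is_kRDF A f -> f v = set0 ->
  k - max_indeg A <= \sum_(u in in_nbhd A v) (#|f u|).-1.
Proof.
move=> /forallP/(_ v) + fv0; rewrite fv0 eqxx => /eqP covered.
have cover_k : k <= \sum_(u in in_nbhd A v) #|f u|.
  by have := leq_card_bigcup (mem (in_nbhd A v)) f; rewrite covered cardsT card_ord.
have split_charge : \sum_(u in in_nbhd A v) #|f u|
    <= \sum_(u in in_nbhd A v) (#|f u|).-1 + indeg A v.
  rewrite /indeg -sum1_card -big_split leq_sum // => u _.
  by rewrite /= addn1 leqSpred.
have := leq_indeg_max v; lia.
Qed.

Lemma kRDF_weight_ge k (f : {ffun V -> {set 'I_k}}) :
  0 < max_outdeg A -> max_indeg A + max_outdeg A <= k ->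
  is_kRDF A f -> #|V| <= weight f.
Proof.
move=> dp_gt0 k_ge f_kRDF.
set charge := \sum_u (#|f u|).-1.
set V0 := [set v | f v == set0].
have collected : #|V0| * (k - max_indeg A)
    <= \sum_v \sum_(u in in_nbhd A v) (#|f u|).-1.
  rewrite -sum_nat_const.
  apply: (@leq_trans (\sum_(v in V0) \sum_(u in in_nbhd A v) (#|f u|).-1)).
    by apply: leq_sum => v; rewrite inE => /eqP /(kRDF_in_nbhd_charge f_kRDF).
  by rewrite [X in _ <= X](bigID (mem V0)) leq_addr.
have lent : \sum_v \sum_(u in in_nbhd A v) (#|f u|).-1 <= charge * max_outdeg A.
  rewrite sum_in_nbhd_outdeg /charge big_distrl leq_sum // => u _.
  by rewrite leq_mul2l leq_outdeg_max orbT.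
have V0_le : #|V0| <= charge.
  rewrite -(leq_pmul2r dp_gt0); apply: leq_trans lent.
  by apply: leq_trans collected; rewrite leq_mul2l; apply/orP; right; lia.
rewrite weight_charge -(cardsC V0) -/charge.
have -> : ~: V0 = [set u | f u != set0] by apply/setP => u; rewrite !inE.
by rewrite leq_add2r.
Qed.

Lemma const_TkRDF k (i : 'I_k) :
  no_isolated A -> is_TkRDF A [ffun=> [set i]].
Proof.
move=> /forallP noiso; apply/andP; split.
  by apply/forallP => v; rewrite ffunE -cards_eq0 cards1.
apply/forallP => v; apply/implyP => _.
have := noiso v; rewrite /isolated negb_and.
by case/orP => /set0Pn [u]; rewrite inE => Auv; apply/existsP; exists u;
  rewrite ffunE -cards_eq0 cards1 Auv ?orbT.
Qed.

Lemma weight_const k (i : 'I_k) : weight [ffun _ : V => [set i]] = #|V|.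
Proof. by rewrite /weight -sum1_card; apply: eq_bigr => v _; rewrite ffunE cards1. Qed.

Lemma gamma_trk_le_weight k (f : {ffun V -> {set 'I_k}}) :
  is_TkRDF A f -> gamma_trk A k <= weight f.
Proof. exact: geq_bigminn_cond. Qed.

Lemma gamma_trk_ge k m :
  m <= k * #|V| ->
  (forall f : {ffun V -> {set 'I_k}}, is_kRDF A f -> m <= weight f) ->
  m <= gamma_trk A k.
Proof.
move=> m_le m_weight; apply: (big_ind (fun x => m <= x)) => //.
- by move=> x y mx my; rewrite leq_min mx my.
- by move=> f /andP[f_kRDF _]; apply: m_weight.
Qed.

End RainbowDomination.

Theorem corollary3p3 (V : finType) (A : rel V) (k : nat) :
  irreflexive A ->
  0 < k ->
  no_isolated A ->
  1 <= max_outdeg A <= max_indeg A ->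
  (max_indeg A) ^ 2 < k ->
  gamma_trk A k = #|V|.
Proof.
move=> _ k_gt0 noiso /andP[dp_gt0 dp_le_dm] dm2_lt_k.
have k_ge : max_indeg A + max_outdeg A <= k by nia.
apply/eqP; rewrite eqn_leq; apply/andP; split.
- rewrite -(weight_const V (Ordinal k_gt0)).
  exact/gamma_trk_le_weight/const_TkRDF.
- apply: gamma_trk_ge; first by rewrite leq_pmull.
  by move=> f; apply: kRDF_weight_ge.
Qed.
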